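(* A quadratical quasigroup of order $9$ is not $k$-translatable, for any $k\in\{1,\dots,8\}$, with respect to any ordering of its elements.
   Context: A quadratical quasigroup is a quasigroup satisfying $xy\cdot x=zx\cdot yz$ for all $x,y,z$ (equivalently, a groupoid satisfying $x\cdot x=x$, $yx\cdot xy=x$, $xy\cdot zw=xz\cdot yw$). A finite groupoid with ordering $q_1,\dots,q_n$ is $k$-translatable ($1\le k<n$) with respect to this ordering if $q_i\cdot q_j=q_{i-1}\cdot q_{j-k}$ for all $i\in\{2,\dots,n\}$, $j\in\{1,\dots,n\}$, indices taken modulo $n$ in $\{1,\dots,n\}$. *)

From mathcomp Require Import all_boot.
Set Implicit Arguments. Unset Strict Implicit. Unset Printing Implicit Defensive.

Definition quasigroup (T : Type) (op : T -> T -> T) : Prop :=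
  (forall a, bijective (op a)) /\ (forall a, bijective (fun x => op x a)).

Definition quadratical (T : Type) (op : T -> T -> T) : Prop :=
  quasigroup op /\
  forall x y z, op (op x y) x = op (op z x) (op y z).

(* Index arithmetic modulo n on 0-based indices 'I_n
   (paper uses 1-based indices q_1..q_n, taken modulo n). *)
Definition idx_mod (n : nat) (m : nat) : 'I_n.+1 := inord (m %% n.+1).

(* k-translatable w.r.t. the ordering q : 'I_n -> T (q bijective), where
   0-based position i corresponds to the paper's q_{i+1}:
   q_i * q_j = q_{i-1} * q_{j-k} for i in {2..n}, j in {1..n}. *)
Definition k_translatable (T : Type) (op : T -> T -> T) (n : nat)
    (q : 'I_n.+1 -> T) (k : nat) : Prop :=
  1 <= k < n.+1 /\
  forall i j : 'I_n.+1, 1 <= i ->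
    op (q i) (q j) = op (q (idx_mod n (i + n))) (q (idx_mod n (j + n.+1 - k))).

From mathcomp Require Import all_boot zify.

Set Implicit Arguments.
Unset Strict Implicit.
Unset Printing Implicit Defensive.

(* For an ordering q of N elements, write q_m for the element at position
   m mod N. Translatability slides the left factor back to position 0:
   q_i q_j = q_0 q_(j - ik); on the diagonal, idempotency gives
   q_i = q_0 q_(i(1 - k)). Since q is injective, 1 - k must be a unit mod N,
   and with c its inverse the operation becomes q_i q_j = q_(c(j - ik)).
   The quadratical identity at (q_0, q_0, q_1) then reads
   c^2 (1 + k^2) = 0 mod N, so N divides k^2 + 1; as -1 is not a square
   mod 3, this is impossible for N = 9. In nat the residues 1 - k and -k are
   represented by N + 1 - k and N - k. *)

Lemma quadratical_idem (T : Type) (op : T -> T -> T) :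
  quadratical op -> forall x, op x x = x.
Proof. by case=> [[opL _] opQ] x; apply: (bij_inj (opL (op x x))); rewrite -opQ. Qed.

Lemma sqr_subn_mod d m : m <= d -> (d - m) ^ 2 = m ^ 2 %[mod d].
Proof.
move=> le_md; rewrite -(modnMDl (2 * m)) addnC.
have -> : (d - m) ^ 2 + 2 * m * d = d * d + m ^ 2.
  by rewrite -[in RHS](subnK le_md); nia.
by rewrite modnMDl.
Qed.

Lemma not_dvd3_sqr_add1 m : ~~ (3 %| m ^ 2 + 1).
Proof.
rewrite /dvdn -modnDml -modnXm.
by case: (m %% 3) (ltn_pmod m (isT : 0 < 3)) => [|[|[|]]].
Qed.

Section Translatable.
Variables (T : Type) (op : T -> T -> T) (n : nat) (q : 'I_n.+1 -> T) (k : nat).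
Hypotheses (q_inj : injective q) (q_trans : k_translatable op q k).
Hypothesis op_idem : forall x, op x x = x.
Local Notation N := n.+1.

Definition qmod (m : nat) : T := q (idx_mod n m).

Lemma qmod_eq a b : a = b %[mod N] -> qmod a = qmod b.
Proof. by rewrite /qmod /idx_mod => ->. Qed.

Lemma qmod_inj a b : qmod a = qmod b -> a = b %[mod N].
Proof. by move/q_inj/(congr1 val); rewrite /= !inordK ?ltn_mod. Qed.

Lemma qmod_ord (i : 'I_N) : qmod i = q i.
Proof. by congr q; apply/val_inj; rewrite /= inordK ?ltn_mod // modn_small. Qed.

Lemma translation_bounds : 0 < k < N.
Proof. by case: q_trans. Qed.

Lemma qmod_translate (i j : 'I_N) : 0 < i ->
  op (qmod i) (qmod j) = op (qmod (i + n)) (qmod (j + N - k)).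
Proof. by rewrite !qmod_ord; apply: q_trans.2. Qed.

Lemma qmod_shift i j : i < n ->
  op (qmod i.+1) (qmod j) = op (qmod i) (qmod (j + (N - k))).
Proof.
move=> lt_in; have /andP[_ lt_kN] := translation_bounds.
have ltSi : i.+1 < N by [].
rewrite -(qmod_eq (modn_mod j N)).
have := @qmod_translate (Ordinal ltSi) (Ordinal (ltn_pmod j (ltn0Sn n))) isT.
move=> /= ->; congr op; apply: qmod_eq; first by rewrite addSnnS modnDr.
by rewrite -addnBA; [exact: modnDml | exact: ltnW].
Qed.

Lemma qmodM_row0 i j : op (qmod i) (qmod j) = op (qmod 0) (qmod (j + i * (N - k))).
Proof.
have row0_lt m j' : m < N ->
    op (qmod m) (qmod j') = op (qmod 0) (qmod (j' + m * (N - k))).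
  elim: m j' => [|m IHm] j' lt_mN; first by rewrite mul0n addn0.
  by rewrite qmod_shift // IHm 1?ltnW // mulSnr addnA addnAC.
rewrite -(qmod_eq (modn_mod i N)).
rewrite row0_lt ?ltn_pmod //; congr op; apply: qmod_eq.
by rewrite -modnDmr modnMml modnDmr.
Qed.

Lemma qmod_diag i : qmod i = op (qmod 0) (qmod (i * (N.+1 - k))).
Proof.
have /andP[_ lt_kN] := translation_bounds.
by rewrite -{1}[qmod i]op_idem qmodM_row0 (subSn (ltnW lt_kN)) mulnS.
Qed.

Lemma coprime_translation : coprime N (N.+1 - k).
Proof.
set x := N.+1 - k; set g := gcdn N x.
have N_dvd : N %| N %/ g.
  have : qmod (N %/ g) = qmod 0.
    rewrite qmod_diag -/x (@qmod_eq (N %/ g * x) 0) ?op_idem //.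
    by rewrite mulnC -muln_divCA_gcd modnMr mod0n.
  by move/qmod_inj/eqP; rewrite mod0n.
rewrite /coprime -dvdn1 -(dvdn_pmul2l (ltn0Sn n)) muln1.
by rewrite -[X in _ %| X](divnK (dvdn_gcdl N x)) dvdn_pmul2r ?gcdn_gt0.
Qed.

Lemma translation_inverse : exists c, c * (N.+1 - k) = 1 %[mod N].
Proof.
have /andP[_ lt_kN] := translation_bounds.
have x_gt0 : 0 < N.+1 - k by rewrite subn_gt0 ltnW.
case: (egcdnP N x_gt0) => c d def_cx _; exists c.
by rewrite def_cx gcdnC (eqnP coprime_translation) modnMDl.
Qed.

Lemma qmod_row0 c : c * (N.+1 - k) = 1 %[mod N] ->
  forall m, op (qmod 0) (qmod m) = qmod (c * m).
Proof.
move=> cx1 m; rewrite (qmod_diag (c * m)); congr op; apply: qmod_eq.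
by rewrite mulnAC -modnMml cx1 modnMml mul1n.
Qed.

Lemma translatable_dvd_sqr_add1 :
  (forall x y z, op (op x y) x = op (op z x) (op y z)) -> N %| k ^ 2 + 1.
Proof.
move=> op_quad; have [c cx1] := translation_inverse.
have /andP[k_gt0 lt_kN] := translation_bounds.
have op_qmod i j : op (qmod i) (qmod j) = qmod (c * (j + i * (N - k))).
  by rewrite qmodM_row0 (qmod_row0 cx1).
have c_coprime : coprime N c.
  have cx1' : c * (N.+1 - k) %% N = 1 by rewrite cx1 modn_small ?(leq_ltn_trans k_gt0).
  rewrite coprime_sym; apply: modn_coprime; last by exists (N.+1 - k).
  by case: c cx1' {cx1 op_qmod}; rewrite // mul0n mod0n.
have := op_quad (qmod 0) (qmod 0) (qmod 1).
rewrite !op_idem !op_qmod mul0n addn0 add0n mul1n muln1.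
move=> /qmod_inj/esym/eqP; rewrite mod0n -/(N %| _).
have -> : c * (c + c * (N - k) * (N - k)) = c * (c * ((N - k) ^ 2 + 1)) by nia.
rewrite !(Gauss_dvdr _ c_coprime) /dvdn -modnDml sqr_subn_mod ?modnDml //.
exact: ltnW.
Qed.

End Translatable.

Theorem corollary8p16 (T : finType) (op : T -> T -> T) :
  #|T| = 9 -> quadratical op ->
  forall (q : 'I_9 -> T), bijective q ->
  forall k : nat, 1 <= k <= 8 -> ~ k_translatable op q k.
Proof.
move=> _ op_quad q q_bij k _ q_trans.
have dvd9 := translatable_dvd_sqr_add1 (bij_inj q_bij) q_trans
  (quadratical_idem op_quad) op_quad.2.
by move: (not_dvd3_sqr_add1 k); rewrite (dvdn_trans _ dvd9).
Qed.
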